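(* Let $n,c\ge 1$ and let $\mathcal A$ be a deterministic automaton over $\Sigma_n^c$ whose acceptance of a run depends only on the set of transitions occurring infinitely often (e.g. a deterministic Rabin, Streett or parity automaton), and assume $\mathcal A$ recognises $L(\mathcal P_n^c)$ or its complement. If words $u,v\in(\Sigma_n^c)^*$ both lead from the initial state $s_0$ of $\mathcal A$ to the same state $s$, then $\mathrm{reach}(u)=\mathrm{reach}(v)$, or $\top\in\mathrm{reach}(u)$ and $\top\in\mathrm{reach}(v)$.
   Context: Full parity automaton $\mathcal P_n^c$: state set $Q$ with $|Q|=n$, plus a special accepting sink $\top\notin Q$ (all transitions from $\top$ lead to $\top$, and any run visiting $\top$ is accepting); $Q^\top=Q\cup\{\top\}$. Alphabet $\Sigma_n^c$ is the set of functions $\sigma:Q\times Q^\top\to 2^{\{1,\dots,c\}}$. Initial states $I=Q$; transitions $(q,\sigma,q')$ with $q\in Q$, $q'\in Q^\top$ and $\sigma(q,q')\neq\emptyset$; the priority of $(q,\sigma,q')$ with $q'\in Q$ is the largest even number in $\sigma(q,q')$ if there is one, and otherwise the smallest (odd) number in $\sigma(q,q')$. A run not visiting $\top$ is accepting iff the largest priority occurring infinitely often is even; a word is accepted iff some run accepts it. $\mathrm{reach}(u)\subseteq Q^\top$ is defined by $\mathrm{reach}(\varepsilon)=Q$ and $\mathrm{reach}(w\sigma)=\{q'\in Q^\top\mid\exists q\in\mathrm{reach}(w).\ (q,\sigma,q')\text{ is a transition}\}$ (with $\top$ always having successor $\top$). *)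

From mathcomp Require Import all_boot.
Set Implicit Arguments. Unset Strict Implicit. Unset Printing Implicit Defensive.

(* States Q = 'I_n; Q^T = option 'I_n, with None playing the role of the sink T.
   Priorities {1,..,c} are represented by 'I_c, the element i standing for i+1. *)
Definition Qtop (n : nat) := option 'I_n.

Definition Sigma (n c : nat) := {ffun 'I_n * option 'I_n -> {set 'I_c}}.

Definition pval (c : nat) (i : 'I_c) : nat := (val i).+1.

Definition ptrans (n c : nat) (q : option 'I_n) (s : Sigma n c) (q' : option 'I_n) : bool :=
  match q with
  | None => q' == None
  | Some p => s (p, q') != set0
  end.

Definition prio (n c : nat) (q : 'I_n) (s : Sigma n c) (q' : 'I_n) : nat :=
  let P := s (q, Some q') in
  if [exists i in P, ~~ odd (pval i)]
  then \max_(i in P | ~~ odd (pval i)) pval i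
  else \big[minn/c.+1]_(i in P) pval i.

Definition inf_often (P : nat -> Prop) : Prop := forall N, exists i, N <= i /\ P i.

Definition prun (n c : nat) (w : nat -> Sigma n c) (r : nat -> option 'I_n) : Prop :=
  r 0 != None /\ forall i, ptrans (r i) (w i) (r i.+1).

Definition prio_at (n c : nat) (w : nat -> Sigma n c) (r : nat -> option 'I_n) (i : nat)
  (p : nat) : Prop :=
  exists q q', r i = Some q /\ r i.+1 = Some q' /\ prio q (w i) q' = p.

Definition prun_accepting (n c : nat) (w : nat -> Sigma n c) (r : nat -> option 'I_n) : Prop :=
  (exists i, r i = None) \/
  (exists p, ~~ odd p /\ inf_often (fun i => prio_at w r i p) /\
     forall p', inf_often (fun i => prio_at w r i p') -> p' <= p).

Definition P_accepts (n c : nat) (w : nat -> Sigma n c) : Prop :=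
  exists r, prun w r /\ prun_accepting w r.

Definition reach_step (n c : nat) (X : {set option 'I_n}) (s : Sigma n c) : {set option 'I_n} :=
  [set q' | [exists q in X, ptrans q s q']].

Definition reach (n c : nat) (u : seq (Sigma n c)) : {set option 'I_n} :=
  foldl (@reach_step n c) [set q | q != None] u.

Definition drun (S A : Type) (s0 : S) (delta : S -> A -> S) (w : nat -> A) : nat -> S :=
  fix r i := match i with 0 => s0 | i'.+1 => delta (r i') (w i') end.

Definition D_accepts (S A : finType) (s0 : S) (delta : S -> A -> S)
  (Acc : {set S * A * S} -> bool) (w : nat -> A) : Prop :=
  exists X : {set S * A * S},
    (forall t, t \in X <->
       inf_often (fun i => (drun s0 delta w i, w i, drun s0 delta w i.+1) = t)) /\
    Acc X.

From mathcomp Require Import all_boot.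
From mathcomp Require Import zify.
Set Implicit Arguments. Unset Strict Implicit. Unset Printing Implicit Defensive.

(* A deterministic automaton whose acceptance only depends on the
   transitions seen infinitely often cannot distinguish the words u w and v w
   when u and v lead to the same state: the two runs coincide after the finite
   prefixes.  Hence L(P_n^c) (or its complement) satisfies
   u w \in L  <->  v w \in L  for every infinite word w.
   Now let x \in reach u.  The letter [to_top x] sends exactly the state x to the
   accepting sink T and has no other transition from Q; so u followed by
   [to_top x]^omega is accepted (reach x, then jump to T), whereas v followed by
   it is rejected as soon as neither x nor T lies in reach v (every run gets
   stuck).  Therefore T \notin reach v forces reach u \subset reach v, and the
   theorem follows by a case analysis on T \in reach u, T \in reach v. *)

Definition catw (A : Type) (u : seq A) (w : nat -> A) (i : nat) : A :=
  if i < size u then nth (w 0) u i else w (i - size u).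

Lemma catw_suffix (A : Type) (u : seq A) (w : nat -> A) k :
  catw u w (size u + k) = w k.
Proof. by rewrite /catw ltnNge leq_addr /= addKn. Qed.

Lemma inf_often_ext (P Q : nat -> Prop) :
  (forall i, P i <-> Q i) -> (inf_often P <-> inf_often Q).
Proof.
move=> PQ; split=> h N; have [i [hi Pi]] := h N; exists i; split=> //; exact/PQ.
Qed.

Lemma inf_often_shift (P : nat -> Prop) m :
  inf_often P <-> inf_often (fun k => P (m + k)).
Proof.
split=> h N.
- have [i [hi Pi]] := h (m + N); exists (i - m); split; first lia.
  by rewrite subnKC //; lia.
- have [k [hk Pk]] := h N; exists (m + k); split=> //; lia.
Qed.

Section DeterministicRuns.
Variables (S A : finType) (s0 : S) (delta : S -> A -> S).

Lemma drun_catw_prefix u w i :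
  i <= size u -> drun s0 delta (catw u w) i = foldl delta s0 (take i u).
Proof.
elim: i => [|i IH] hi; first by rewrite take0.
rewrite /= IH; last lia.
by rewrite (take_nth (w 0)) ?foldl_rcons /catw ?ifT //; lia.
Qed.

Lemma drun_catw_suffix u w k :
  drun s0 delta (catw u w) (size u + k) = drun (foldl delta s0 u) delta w k.
Proof.
elim: k => [|k IH]; first by rewrite addn0 drun_catw_prefix // take_size.
by rewrite addnS /= IH catw_suffix.
Qed.

Lemma inf_trans_catw u w t :
  inf_often (fun i => (drun s0 delta (catw u w) i, catw u w i,
                       drun s0 delta (catw u w) i.+1) = t) <->
  inf_often (fun k => (drun (foldl delta s0 u) delta w k, w k,
                       drun (foldl delta s0 u) delta w k.+1) = t).
Proof.
rewrite (inf_often_shift _ (size u)); apply: inf_often_ext => k.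
by rewrite -addnS !drun_catw_suffix catw_suffix.
Qed.

Lemma D_accepts_prefix_congr (Acc : {set S * A * S} -> bool) u v w :
  foldl delta s0 u = foldl delta s0 v ->
  D_accepts s0 delta Acc (catw u w) <-> D_accepts s0 delta Acc (catw v w).
Proof.
move=> same_state.
split=> -[X [HX HA]]; exists X; split=> // t;
  by rewrite HX !inf_trans_catw same_state.
Qed.

Lemma recognised_prefix_congr (Acc : {set S * A * S} -> bool) (L : (nat -> A) -> Prop)
    u v w :
  (forall w, D_accepts s0 delta Acc w <-> L w) ->
  foldl delta s0 u = foldl delta s0 v -> L (catw u w) <-> L (catw v w).
Proof.
move=> rec same_state.
by rewrite -!rec; exact: D_accepts_prefix_congr.
Qed.

End DeterministicRuns.

Section FiniteRuns.
Variables n c : nat.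

Lemma reach_run (X : {set option 'I_n}) (u : seq (Sigma n c)) x d :
  x \in foldl (@reach_step n c) X u ->
  exists r : nat -> option 'I_n, r 0 \in X /\
    (forall i, i < size u -> ptrans (r i) (nth d u i) (r i.+1)) /\ r (size u) = x.
Proof.
elim: u X => [|s u IH] X /=; first by move=> hx; exists (fun _ => x).
move=> /IH [r [r0 [tr rx]]].
move: r0; rewrite inE => /existsP [q /andP [qX tq]].
exists (fun i => if i is i'.+1 then r i' else q); split=> //; split=> // [[|i]] hi //=.
apply: tr; lia.
Qed.

Lemma run_reach (X : {set option 'I_n}) (u : seq (Sigma n c)) d (r : nat -> option 'I_n) :
  r 0 \in X -> (forall i, i < size u -> ptrans (r i) (nth d u i) (r i.+1)) ->
  r (size u) \in foldl (@reach_step n c) X u.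
Proof.
elim: u X r => [|s u IH] X r //= r0 tr.
apply: (IH _ (fun i => r i.+1)) => [|i hi]; last exact: (tr i.+1).
by rewrite inE; apply/existsP; exists (r 0); rewrite r0 /=; exact: (tr 0).
Qed.

(* The letter whose only transitions from Q lead from x to the sink T. *)
Definition to_top (x : option 'I_n) : Sigma n c :=
  [ffun pq : 'I_n * option 'I_n =>
     if (Some pq.1 == x) && (pq.2 == None) then [set: 'I_c] else set0].

Lemma ptrans_to_top x q q' :
  1 <= c -> q != None -> ptrans q (to_top x) q' = (q == x) && (q' == None).
Proof.
move=> hc; case: q => [p|] // _ /=; rewrite ffunE /=.
case: (_ && _); last by rewrite eqxx.
by apply/set0Pn; exists (Ordinal hc).
Qed.

Lemma to_top_accepted (u : seq (Sigma n c)) x :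
  1 <= c -> x \in reach u -> P_accepts (catw u (fun=> to_top x)).
Proof.
move=> hc /(reach_run (to_top x)) [r [r0 [tr rx]]].
exists (fun i => if i <= size u then r i else None); split; last first.
  by left; exists (size u).+1; rewrite ltnn.
split; first by move: r0; rewrite leq0n inE.
move=> i; case: (ltngtP i (size u)) => hi //.
- by rewrite /catw hi; exact: tr.
- rewrite hi -[size u]addn0 catw_suffix addn0 rx.
  by case: x {tr} rx => [p|] // rx; rewrite ptrans_to_top // eqxx.
Qed.

Lemma to_top_rejected (v : seq (Sigma n c)) x :
  1 <= c -> x \notin reach v -> None \notin reach v ->
  ~ P_accepts (catw v (fun=> to_top x)).
Proof.
move=> hc xNv topNv [r [[r0 tr] _]].
have rv : r (size v) \in reach v.
  apply: (run_reach (d := to_top x)); first by rewrite inE.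
  by move=> i hi; move: (tr i); rewrite /catw hi.
have rv_state : r (size v) != None by apply: contraNneq topNv => <-.
move: (tr (size v)); rewrite -[size v]addn0 catw_suffix addn0 ptrans_to_top //.
by case/andP => /eqP rvx; rewrite -rvx rv in xNv.
Qed.

End FiniteRuns.

Lemma reach_subset (n c : nat) (hc : 1 <= c)
  (S : finType) (s0 : S) (delta : S -> Sigma n c -> S)
  (Acc : {set S * Sigma n c * S} -> bool) :
  ((forall w, D_accepts s0 delta Acc w <-> P_accepts w) \/
   (forall w, D_accepts s0 delta Acc w <-> ~ P_accepts w)) ->
  forall u v : seq (Sigma n c),
    foldl delta s0 u = foldl delta s0 v ->
    None \notin reach v -> reach u \subset reach v.
Proof.
move=> recognises u v same_state topNv; apply/subsetP => x xu.
apply/negPn/negP => xNv.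
have acc_u := to_top_accepted hc xu.
have rej_v := to_top_rejected hc xNv topNv.
case: recognises => rec.
- by apply/rej_v/(recognised_prefix_congr _ rec same_state).
- by apply/(recognised_prefix_congr _ rec same_state): acc_u.
Qed.

Theorem mainTheorem6 (n c : nat) (hn : 1 <= n) (hc : 1 <= c)
  (S : finType) (s0 : S) (delta : S -> Sigma n c -> S)
  (Acc : {set S * Sigma n c * S} -> bool) :
  ((forall w, D_accepts s0 delta Acc w <-> P_accepts w) \/
   (forall w, D_accepts s0 delta Acc w <-> ~ P_accepts w)) ->
  forall u v : seq (Sigma n c),
    foldl delta s0 u = foldl delta s0 v ->
    reach u = reach v \/ (None \in reach u /\ None \in reach v).
Proof.
move=> recognises u v same_state.
have sub_uv := reach_subset hc recognises same_state.
have sub_vu := reach_subset hc recognises (esym same_state).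
case: (boolP (None \in reach u)) => topu; case: (boolP (None \in reach v)) => topv.
- by right.
- by have := subsetP (sub_uv topv) _ topu; rewrite (negbTE topv).
- by have := subsetP (sub_vu topu) _ topv; rewrite (negbTE topu).
- by left; apply/eqP; rewrite eqEsubset sub_uv ?sub_vu.
Qed.
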